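(* For $q\ge 1$, the bivariate generating function $W_q(x,y)=\sum_{n,k\ge0}w_{n,k}x^ny^k$, where $w_{n,k}$ is the number of $q$-decreasing binary words of length $n$ containing exactly $k$ letters $1$, is $$W_q(x,y)=\frac{1-x^{q+1}y^q}{1-xy-x+x^{q+2}y^{q+1}}.$$
   Context: For $q\ge1$, a binary word is $q$-decreasing if for every maximal run of $0$s, of length $a>0$, together with the (possibly empty) maximal run of $1$s immediately following it, of length $b$, one has $q\cdot a>b$. The empty word counts as the unique word of length $0$. *)

From mathcomp Require Import all_boot all_order all_algebra.
Set Implicit Arguments. Unset Strict Implicit. Unset Printing Implicit Defensive.
Import GRing.Theory Num.Theory.

(* Binary words are [seq bool]: [false] is the letter 0, [true] the letter 1. *)

(* w is q-decreasing iff for every decomposition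
     w = u ++ 0^a ++ 1^b ++ v
   in which 0^a (a > 0) is a maximal run of 0s (u is empty or ends with 1)
   and 1^b is the (possibly empty) maximal run of 1s immediately following it
   (v is empty, or b > 0 and v starts with 0), we have q * a > b.
   The prefix u is [take i w] and v is [drop (i+a+b) w]; the bounds
   i, a, b <= size w are automatic for any such decomposition. *)
Definition q_decreasing (q : nat) (w : seq bool) : bool :=
  [forall i : 'I_(size w).+1, forall a : 'I_(size w).+1, forall b : 'I_(size w).+1,
     let u := take i w in
     let v := drop (i + a + b) w in
     [&& w == u ++ nseq a false ++ nseq b true ++ v,
         0 < a,
         last true u &
         (v == [::]) || ((0 < b) && ~~ head true v)]
     ==> (b < q * a)].

Definition w_count (q n k : nat) : nat :=
  #|[set t : n.-tuple bool | q_decreasing q t && (count id t == k)]|.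

(* Formal bivariate power series in x, y with integer coefficients:
   s n k is the coefficient of x^n y^k. *)
Definition series := nat -> nat -> int.

Definition smul (f g : series) : series :=
  fun n k => (\sum_(i < n.+1) \sum_(j < k.+1) f i j * g (n - i)%N (k - j)%N)%R.

Definition smono (c : int) (a b : nat) : series :=
  fun n k => if (n == a) && (k == b) then c else 0%R.

Definition sadd (f g : series) : series := fun n k => (f n k + g n k)%R.

Definition W (q : nat) : series := fun n k => Posz (w_count q n k).

Definition Wnum (q : nat) : series :=
  sadd (smono 1%R 0 0) (smono (-1)%R q.+1 q).

Definition Wden (q : nat) : series :=
  sadd (sadd (smono 1%R 0 0) (smono (-1)%R 1 1))
       (sadd (smono (-1)%R 1 0) (smono 1%R q.+2 q.+1)).

From mathcomp Require Import all_boot all_order all_algebra zify.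
Set Implicit Arguments. Unset Strict Implicit. Unset Printing Implicit Defensive.
Import GRing.Theory.

(* Sort q-decreasing words by their last letter.  Appending 0 to a word never
   changes whether it is q-decreasing, and appending 1 to a q-decreasing word
   keeps it q-decreasing unless the word is saturated, i.e. ends with a maximal
   run 0^a followed by 1^(qa-1).  Writing s(n,k) for the number of saturated
   q-decreasing words, this gives
     w(n+1,k+1) = w(n,k+1) + w(n,k) - s(n,k).
   Deleting one 0 and q 1s from the last block of a saturated word
   u 0^a 1^(qa-1) leaves a saturated word when a >= 2; when a = 1 it deletes
   the block together with the final 1 of u, leaving a q-decreasing word that
   is not saturated.  Hence s(n+q+1,k+q) = w(n,k), and apart from these values
   only s(q,q-1) = 1 is nonzero.  Together these recurrences are the
   coefficients of (1 - xy - x + x^(q+2) y^(q+1)) W_q = 1 - x^(q+1) y^q. *)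

Definition blocks_bounded q (z : seq bool) := forall u a b v,
  z = u ++ nseq a false ++ nseq b true ++ v -> 0 < a -> last true u ->
  (v == [::]) || (0 < b) && ~~ head true v -> b < q * a.

Lemma q_decreasingP q z : q_decreasing q z <-> blocks_bounded q z.
Proof.
split=> [/forallP qdz u a b v Ez a_gt0 u1 v0 | bbz].
  have size_z : size z = size u + a + b + size v.
    by rewrite Ez !size_cat !size_nseq; lia.
  have lt_u : size u < (size z).+1 by lia.
  have lt_a : a < (size z).+1 by lia.
  have lt_b : b < (size z).+1 by lia.
  move: (qdz (Ordinal lt_u)) => /forallP /(_ (Ordinal lt_a)).
  move=> /forallP /(_ (Ordinal lt_b)) /implyP /=; apply.
  have -> : take (size u) z = u by rewrite Ez take_size_cat.
  have -> : drop (size u + a + b) z = v.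
    by rewrite Ez !catA drop_size_cat // !size_cat !size_nseq; lia.
  by rewrite -Ez eqxx a_gt0 u1.
apply/forallP => i; apply/forallP => a; apply/forallP => b; apply/implyP => /=.
by case/and4P=> /eqP; apply: bbz.
Qed.

Lemma nseqSr n (x : bool) : nseq n.+1 x = rcons (nseq n x) x.
Proof. by rewrite -addn1 nseqD cats1. Qed.

Lemma last_nseq_gt0 n (x y : bool) : 0 < n -> last y (nseq n x) = x.
Proof. by case: n => // n _; rewrite nseqSr last_rcons. Qed.

Lemma rcons_eq_block z x u a b v :
  rcons z x = u ++ nseq a false ++ nseq b true ++ v -> 0 < a ->
  [\/ [/\ v = [::], b = 0, x = false & z = u ++ nseq a.-1 false],
      [/\ v = [::], 0 < b, x = true & z = u ++ nseq a false ++ nseq b.-1 true]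
    | exists2 v', v = rcons v' x & z = u ++ nseq a false ++ nseq b true ++ v'].
Proof.
case/lastP: v => [|v' y].
- case: b => [|b]; case: a => [|a] //; rewrite ?cats0 => Ez _.
  + by move: Ez; rewrite nseqSr -rcons_cat => /rcons_inj [-> ->]; apply: Or31.
  + by move: Ez; rewrite (nseqSr b) -!rcons_cat => /rcons_inj [-> ->]; apply: Or32.
- by rewrite -!rcons_cat => /rcons_inj [-> ->] _; apply: Or33; exists v'; rewrite ?catA.
Qed.

Lemma block_end_rcons b v (x : bool) :
  (rcons v x == [::]) || (0 < b) && ~~ head true (rcons v x) ->
  (v == [::]) || (0 < b) && ~~ head true v.
Proof. by case: v. Qed.

Lemma eq_cat_nseq_runs (x : bool) s s' n n' :
  last (~~ x) s = ~~ x -> last (~~ x) s' = ~~ x ->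
  s ++ nseq n x = s' ++ nseq n' x -> s = s' /\ n = n'.
Proof.
have last_x m t : last (~~ x) (t ++ nseq m.+1 x) = x.
  by rewrite last_cat last_nseq_gt0.
elim: n n' => [|n IHn] [|n'] ls ls'; rewrite ?cats0 //.
- by move=> Es; move: ls; rewrite Es last_x => /eqP; case: (x).
- by move=> Es; move: ls'; rewrite -Es last_x => /eqP; case: (x).
by rewrite !nseqSr -!rcons_cat => /rcons_inj [/IHn] [] // -> ->.
Qed.

Lemma eq_last_block u a b u' a' b' :
  last true u -> last true u' -> 0 < a -> 0 < a' ->
  u ++ nseq a false ++ nseq b true = u' ++ nseq a' false ++ nseq b' true ->
  [/\ u = u', a = a' & b = b'].
Proof.
move=> u1 u'1 a_gt0 a'_gt0; rewrite !catA.
case/eq_cat_nseq_runs; rewrite ?last_cat ?last_nseq_gt0 //.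
by case/eq_cat_nseq_runs => //= -> ->.
Qed.

Definition maxblock q a := nseq a false ++ nseq (q * a).-1 true.

Lemma size_maxblock q a : size (maxblock q a) = a + (q * a).-1.
Proof. by rewrite size_cat !size_nseq. Qed.

Lemma count_maxblock q a : count id (maxblock q a) = (q * a).-1.
Proof. by rewrite count_cat !count_nseq /= mul0n mul1n. Qed.

Definition ends_maxblock q a (z : seq bool) :=
  let m := size z - size (maxblock q a) in
  [&& 0 < a, size (maxblock q a) <= size z,
      drop m z == maxblock q a & last true (take m z)].

Lemma ends_maxblockP q a z :
  reflect (exists2 u, z = u ++ maxblock q a & (0 < a) && last true u)
          (ends_maxblock q a z).
Proof.
apply: (iffP and4P) => [[a_gt0 _ /eqP Ed u1] | [u -> /andP [a_gt0 u1]]].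
  exists (take (size z - size (maxblock q a)) z); last by rewrite a_gt0.
  by rewrite -[in X in _ ++ X]Ed cat_take_drop.
by rewrite size_cat leq_addl addnK take_size_cat ?drop_size_cat.
Qed.

Lemma ends_maxblock_leq q a z : ends_maxblock q a z -> a <= size z.
Proof. by case/and4P=> _ + _ _; rewrite size_maxblock; lia. Qed.

Lemma ends_maxblock_uniq q a a' z :
  ends_maxblock q a z -> ends_maxblock q a' z -> a = a'.
Proof.
case/ends_maxblockP=> u -> /andP [a_gt0 u1] /ends_maxblockP [u' Ez /andP [a'_gt0 u'1]].
by case: (eq_last_block u1 u'1 a_gt0 a'_gt0 Ez).
Qed.

Definition saturated q (z : seq bool) :=
  has (ends_maxblock q ^~ z) (iota 0 (size z).+1).

Lemma saturatedP q z :
  reflect (exists a, ends_maxblock q a z) (saturated q z).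
Proof.
apply: (iffP hasP) => [[a _ ?] | [a za]]; first by exists a.
by exists a; rewrite // mem_iota ltnS (ends_maxblock_leq za).
Qed.

Lemma saturated_block q u a b : last true u -> 0 < a ->
  saturated q (u ++ nseq a false ++ nseq b true) = (b == (q * a).-1).
Proof.
move=> u1 a_gt0; apply/saturatedP/eqP => [[a'] | ->]; last first.
  by exists a; apply/ends_maxblockP; exists u; rewrite ?a_gt0.
case/ends_maxblockP=> u' Ez /andP [a'_gt0 u'1].
by case: (eq_last_block u1 u'1 a_gt0 a'_gt0 Ez) => _ -> ->.
Qed.

Lemma q_decreasing_nil q : q_decreasing q [::].
Proof.
by apply/q_decreasingP => u a b v /(congr1 size); rewrite !size_cat !size_nseq /=; lia.
Qed.

Section AppendLetter.

Variable q : nat.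
Hypothesis q_gt0 : 0 < q.

Lemma q_decreasing_rcons0 z : q_decreasing q (rcons z false) = q_decreasing q z.
Proof.
have qa_gt0 a : 0 < a -> 0 < q * a by rewrite muln_gt0 q_gt0.
apply/idP/idP => /q_decreasingP qdz; apply/q_decreasingP.
  move=> u a [|b] v Ez a_gt0 u1 /orP [/eqP Ev | v0]; rewrite ?qa_gt0 //.
    by apply: (qdz u a b.+1 [:: false]); rewrite // Ez Ev cats0 -cats1 -!catA.
  by apply: (qdz u a b.+1 (rcons v false)); rewrite ?Ez -?rcons_cat //; case: v {Ez} v0.
move=> u a b v Ez a_gt0 u1 v0.
case: (rcons_eq_block Ez a_gt0) => [[_ -> _ _] | [] // | [v' Ev Ez']].
  by rewrite qa_gt0.
by apply: (qdz u a b v' Ez' a_gt0 u1); apply: (@block_end_rcons _ _ false); rewrite -Ev.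
Qed.

Lemma q_decreasing_rcons1 z :
  q_decreasing q (rcons z true) = q_decreasing q z && ~~ saturated q z.
Proof.
have qa_gt0 a : 0 < a -> 0 < q * a by rewrite muln_gt0 q_gt0.
apply/idP/andP => [/q_decreasingP qdz | [/q_decreasingP qdz /saturatedP sat_z]].
  split.
    apply/q_decreasingP => u a b v Ez a_gt0 u1 /orP [/eqP Ev | v0].
      suff : b.+1 < q * a by lia.
      by apply: (qdz u a b.+1 [::]); rewrite // Ez Ev !cats0 nseqSr -!rcons_cat.
    by apply: (qdz u a b (rcons v true)); rewrite ?Ez -?rcons_cat //; case: v {Ez} v0.
  apply/saturatedP => -[a /ends_maxblockP [u Ez /andP [a_gt0 u1]]].
  suff : (q * a).-1.+1 < q * a by lia.
  by apply: (qdz u a _ [::]); rewrite // Ez cats0 nseqSr -!rcons_cat.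
apply/q_decreasingP => u a b v Ez a_gt0 u1 v0.
case: (rcons_eq_block Ez a_gt0) => [[] // | [_ b_gt0 _ Ez'] | [v' Ev Ez']].
  have := qdz u a b.-1 [::]; rewrite cats0 => /(_ Ez' a_gt0 u1 isT) lt_b.
  suff : b.-1 != (q * a).-1 by have := qa_gt0 a a_gt0; lia.
  apply: contra_notN sat_z => /eqP b_max; exists a.
  by apply/ends_maxblockP; exists u; rewrite ?a_gt0 // Ez' /maxblock b_max.
by apply: (qdz u a b v' Ez' a_gt0 u1); apply: (@block_end_rcons _ _ true); rewrite -Ev.
Qed.

Lemma q_decreasing_zeros u a :
  q_decreasing q (u ++ nseq a false) = q_decreasing q u.
Proof.
elim: a => [|a IHa]; first by rewrite cats0.
by rewrite nseqSr -rcons_cat q_decreasing_rcons0.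
Qed.

Lemma q_decreasing_block u a b : last true u -> 0 < a ->
  q_decreasing q (u ++ nseq a false ++ nseq b true) =
  q_decreasing q u && (b < q * a).
Proof.
move=> u1 a_gt0; have qa_gt0 : 0 < q * a by rewrite muln_gt0 q_gt0.
elim: b => [|b IHb]; first by rewrite cats0 q_decreasing_zeros qa_gt0 andbT.
rewrite nseqSr -!rcons_cat q_decreasing_rcons1 IHb saturated_block //.
by case: (q_decreasing q u) => //=; apply/idP/idP; lia.
Qed.

Lemma q_decreasing_maxblock u a : 0 < a -> last true u ->
  q_decreasing q (u ++ maxblock q a) = q_decreasing q u.
Proof.
move=> a_gt0 u1; have qa_gt0 : 0 < q * a by rewrite muln_gt0 q_gt0.
by rewrite q_decreasing_block // prednK // leqnn andbT.
Qed.

End AppendLetter.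

Fixpoint words n : seq (seq bool) :=
  if n is n'.+1 then [seq rcons z false | z <- words n'] ++ [seq rcons z true | z <- words n']
  else [:: [::]].

Lemma mem_words n z : (z \in words n) = (size z == n).
Proof.
elim: n z => [|n IHn] z; first by rewrite inE size_eq0.
case/lastP: z => [|z c]; rewrite mem_cat.
  by apply/negbTE/norP; split; apply/mapP => -[y _ /(congr1 size)]; rewrite size_rcons.
rewrite size_rcons eqSS -IHn; apply/orP/idP => [[] /mapP [y y_n /rcons_inj [-> _]] // | z_n].
by case: c; [right | left]; apply: map_f.
Qed.

Lemma uniq_words n : uniq (words n).
Proof.
elim: n => //= n IHn; rewrite cat_uniq !(map_inj_uniq (@rcons_injl _ _)) IHn /= andbT.
by apply/hasPn => _ /mapP [y _ ->]; apply/mapP => -[y' _ /rcons_inj []].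
Qed.

Lemma count_words_catr (P : pred (seq bool)) s n :
  count (fun z => (drop n z == s) && P (take n z)) (words (n + size s)) =
  count P (words n).
Proof.
rewrite -size_filter -[RHS]size_filter -[RHS](size_map (cat^~ s)).
apply/perm_size/uniq_perm; first exact: filter_uniq (uniq_words _).
  rewrite map_inj_in_uniq; first exact: filter_uniq (uniq_words _).
  move=> u u'.
  rewrite !mem_filter !mem_words => /andP [_ /eqP u_n] /andP [_ /eqP u'_n] /= Es.
  by rewrite -(take_size_cat s u_n) Es take_size_cat.
move=> z; rewrite mem_filter mem_words; apply/idP/mapP.
  case/andP=> /andP [/eqP Ed Pz] /eqP z_n; exists (take n z); last first.
    by rewrite -[in X in _ ++ X]Ed cat_take_drop.
  by rewrite mem_filter Pz mem_words size_takel //; lia.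
case=> u; rewrite mem_filter mem_words => /andP [Pu /eqP u_n] ->.
by rewrite drop_size_cat // take_size_cat // Pu size_cat u_n !eqxx.
Qed.

Definition nwords (P : pred (seq bool)) n k :=
  count (fun z => P z && (count id z == k)) (words n).

Lemma card_tuples_nwords (P : pred (seq bool)) n k :
  #|[set t : n.-tuple bool | P t && (count id t == k)]| = nwords P n k.
Proof.
rewrite cardsE cardE /enum_mem size_filter -enumT /nwords.
rewrite (@eq_count _ _ (preim val (fun z => P z && (count id z == k)))) //.
rewrite -count_map; apply/permP/uniq_perm; rewrite ?uniq_words //.
  by rewrite (map_inj_uniq val_inj) enum_uniq.
move=> z; rewrite mem_words; apply/mapP/eqP => [[t _ ->] | z_n].
  exact: size_tuple.
by exists (Tuple (introT eqP z_n)); rewrite ?mem_enum.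
Qed.

Lemma eq_nwords P Q : P =1 Q -> nwords P =2 nwords Q.
Proof. by move=> eqPQ n k; apply: eq_count => z; rewrite /= eqPQ. Qed.

Lemma nwords0 P k : nwords P 0 k = P [::] && (k == 0).
Proof. by rewrite /nwords /= addn0 eq_sym; case: (_ && _). Qed.

Lemma nwordsS0 P n :
  nwords P n.+1 0 = nwords (fun z => P (rcons z false)) n 0.
Proof.
rewrite /nwords /= count_cat !count_map.
rewrite [X in _ + X](@eq_count _ _ pred0) ?count_pred0 ?addn0 => [|z].
  by apply: eq_count => z; rewrite /= -cats1 count_cat addn0.
by rewrite /= -cats1 count_cat addn1 andbF.
Qed.

Lemma nwordsSS P n k : nwords P n.+1 k.+1 =
  nwords (fun z => P (rcons z false)) n k.+1 + nwords (fun z => P (rcons z true)) n k.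
Proof.
rewrite /nwords /= count_cat !count_map.
by congr (_ + _); apply: eq_count => z; rewrite /= -cats1 count_cat ?addn0 ?addn1.
Qed.

Lemma nwords_split P Q n k :
  nwords (fun z => P z && Q z) n k + nwords (fun z => P z && ~~ Q z) n k = nwords P n k.
Proof.
rewrite /nwords -count_predUI [X in _ + X](@eq_count _ _ pred0) ?count_pred0 ?addn0.
  by apply: eq_count => z /=; case: (P z); case: (Q z); case: (_ == k).
by move=> z /=; case: (P z); case: (Q z); case: (_ == k).
Qed.

Lemma ends_maxblock_cat q a u :
  ends_maxblock q a (u ++ maxblock q a) = (0 < a) && last true u.
Proof.
by rewrite /ends_maxblock size_cat leq_addl addnK take_size_cat ?drop_size_cat ?eqxx ?andbT.
Qed.

Lemma saturated_sum q z M : size z < M ->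
  saturated q z = \sum_(a < M) ends_maxblock q a.+1 z :> nat.
Proof.
move=> lt_zM; case: saturatedP => [[a za] | no_a]; last first.
  by rewrite big1 // => a _; apply/eqP; rewrite eqb0; apply: contra_notN no_a; exists a.+1.
have a_gt0 : 0 < a by case/and4P: za.
have lt_aM : a.-1 < M by have := ends_maxblock_leq za; lia.
rewrite (bigD1 (Ordinal lt_aM)) //= prednK // za big1 // => b /eqP neq_b.
apply/eqP; rewrite eqb0; apply/negP => zb; apply: neq_b; apply/val_inj => /=.
by have := ends_maxblock_uniq zb za; lia.
Qed.

Section Counting.

Variable q : nat.
Hypothesis q_gt0 : 0 < q.

Lemma nwords_qdS0 n : nwords (q_decreasing q) n.+1 0 = nwords (q_decreasing q) n 0.
Proof. by rewrite nwordsS0 (eq_nwords (q_decreasing_rcons0 q_gt0)). Qed.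

Lemma nwords_qdSS n k :
  nwords (q_decreasing q) n.+1 k.+1
    + nwords (fun z => q_decreasing q z && saturated q z) n k =
  nwords (q_decreasing q) n k.+1 + nwords (q_decreasing q) n k.
Proof.
rewrite nwordsSS (eq_nwords (q_decreasing_rcons0 q_gt0)).
by rewrite (eq_nwords (q_decreasing_rcons1 q_gt0)) -addnA [X in _ + X]addnC nwords_split.
Qed.

Lemma nwords_qd_last1_0 k :
  nwords (fun z => q_decreasing q z && last true z) 0 k = (k == 0).
Proof. by rewrite nwords0 q_decreasing_nil. Qed.

Lemma nwords_qd_last1S0 n :
  nwords (fun z => q_decreasing q z && last true z) n.+1 0 = 0.
Proof.
rewrite nwordsS0 (@eq_nwords _ pred0) => [|z]; last by rewrite last_rcons andbF.
by rewrite /nwords count_pred0.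
Qed.

Lemma nwords_qd_last1SS n k :
  nwords (fun z => q_decreasing q z && last true z) n.+1 k.+1
    + nwords (fun z => q_decreasing q z && saturated q z) n k =
  nwords (q_decreasing q) n k.
Proof.
rewrite nwordsSS (@eq_nwords _ pred0) => [|z]; last by rewrite last_rcons andbF.
rewrite {1}/nwords count_pred0 add0n addnC -[RHS](nwords_split _ (saturated q)).
by congr (_ + _); apply: eq_nwords => z; rewrite q_decreasing_rcons1 // last_rcons andbT.
Qed.

Lemma nwords_qd_maxblockE a n k : 0 < a ->
  nwords (fun z => q_decreasing q z && ends_maxblock q a z) n k =
  if (size (maxblock q a) <= n) && ((q * a).-1 <= k)
  then nwords (fun z => q_decreasing q z && last true z)
         (n - size (maxblock q a)) (k - (q * a).-1)
  else 0.
Proof.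
move=> a_gt0; have lt_qa : (q * a).-1 < q * a by rewrite prednK // muln_gt0 q_gt0.
case: ifP => [/andP [le_n le_k] | gt_nk]; last first.
  rewrite /nwords (@eq_in_count _ _ pred0) ?count_pred0 // => z.
  rewrite mem_words => /eqP z_n /=; apply/negbTE/negP.
  case/andP=> /andP [_ /ends_maxblockP [u Ez _]] /eqP ones_z.
  move: gt_nk z_n ones_z; rewrite Ez !count_cat !size_cat !count_nseq !size_nseq /=; lia.
set m := n - _; set j := k - _.
have -> : n = m + size (maxblock q a) by rewrite subnK.
rewrite /nwords -[RHS](count_words_catr _ (maxblock q a)).
apply: eq_in_count => z; rewrite mem_words => /eqP z_n /=.
have [Ed | Nd] := eqVneq (drop m z) (maxblock q a); last first.
  by rewrite /ends_maxblock /= z_n addnK (negbTE Nd) !andbF.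
rewrite -{1 2 3}(cat_take_drop m z) Ed ends_maxblock_cat a_gt0 /=.
rewrite count_cat count_maxblock -{1}(subnK le_k) eqn_add2r.
case: (boolP (last true _)) => u1; rewrite ?andbF //.
by rewrite q_decreasing_maxblock.
Qed.

Lemma nwords_qd_maxblock_shift a m j : 0 < a ->
  nwords (fun z => q_decreasing q z && ends_maxblock q a.+1 z) (m + q.+1) (j + q) =
  nwords (fun z => q_decreasing q z && ends_maxblock q a z) m j.
Proof.
move=> a_gt0; rewrite !nwords_qd_maxblockE // !size_maxblock.
have qa_gt0 : 0 < q * a by rewrite muln_gt0 q_gt0.
have -> : a.+1 + (q * a.+1).-1 = a + (q * a).-1 + q.+1 by rewrite mulnS; lia.
have -> : (q * a.+1).-1 = (q * a).-1 + q by rewrite mulnS; lia.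
by rewrite !leq_add2r !subnDr.
Qed.

Lemma nwords_qd_sat_sum n k M : n < M ->
  nwords (fun z => q_decreasing q z && saturated q z) n k =
  \sum_(a < M) nwords (fun z => q_decreasing q z && ends_maxblock q a.+1 z) n k.
Proof.
move=> lt_nM; have count_sum P : count P (words n) = \sum_(z <- words n) P z.
  by rewrite -sumn_count sumnE big_map.
rewrite /nwords; under eq_bigr do rewrite count_sum.
rewrite count_sum exchange_big /=; apply: eq_big_seq => z; rewrite mem_words => /eqP z_n.
rewrite andbAC; under eq_bigr do rewrite andbAC.
case: (q_decreasing q z && _) => /=; last by rewrite big1.
by rewrite (@saturated_sum _ _ M) ?z_n.
Qed.

Lemma nwords_qd_sat_shift m j :
  nwords (fun z => q_decreasing q z && saturated q z) (m + q.+1) (j + q) =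
  nwords (q_decreasing q) m j.
Proof.
rewrite (@nwords_qd_sat_sum _ _ (m + q.+1).+1) // big_ord_recl /=.
rewrite nwords_qd_maxblockE // size_maxblock muln1 add1n prednK //.
rewrite ifT; last by apply/andP; split; lia.
have -> : m + q.+1 - q = m.+1 by lia.
have -> : j + q - q.-1 = j.+1 by lia.
under eq_bigr do rewrite nwords_qd_maxblock_shift //.
by rewrite -nwords_qd_sat_sum ?nwords_qd_last1SS //; lia.
Qed.

Lemma nwords_qd_sat_small m j : (m <= q) || (j < q) ->
  nwords (fun z => q_decreasing q z && saturated q z) m j = (m == q) && (j == q.-1).
Proof.
move=> small; rewrite (@nwords_qd_sat_sum _ _ m.+1) // big_ord_recl big1 ?addn0 => [|a _].
  rewrite nwords_qd_maxblockE // size_maxblock muln1 add1n prednK //.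
  case: ifP => [/andP [le_qm le_j] | big_mj]; last by lia.
  have [-> | neq_mq] := eqVneq m q.
    by rewrite subnn nwords_qd_last1_0 /=; apply/eqP/eqP; lia.
  have -> : j - q.-1 = 0 by lia.
  have -> : m - q = (m - q.+1).+1 by lia.
  by rewrite nwords_qd_last1S0.
rewrite nwords_qd_maxblockE // size_maxblock ifF //.
by apply/negbTE; rewrite negb_and -!ltnNge !mulnS; lia.
Qed.

Lemma nwords_qd0 k : nwords (q_decreasing q) 0 k = (k == 0).
Proof. by rewrite nwords0 q_decreasing_nil. Qed.

Lemma nwords_qd_satE m j :
  nwords (fun z => q_decreasing q z && saturated q z) m j =
  if (q < m) && (q <= j) then nwords (q_decreasing q) (m - q.+1) (j - q)
  else (m == q) && (j == q.-1).
Proof.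
case: ifP => [/andP [lt_qm le_qj] | /negbT].
  by rewrite -{1}(subnK lt_qm) -{1}(subnK le_qj) nwords_qd_sat_shift.
by rewrite negb_and -leqNgt -ltnNge; apply: nwords_qd_sat_small.
Qed.

End Counting.

Section SeriesAlgebra.

Local Open Scope ring_scope.

Lemma smul_saddl f1 f2 g n k :
  smul (sadd f1 f2) g n k = smul f1 g n k + smul f2 g n k.
Proof.
rewrite /smul /sadd -big_split; apply: eq_bigr => i _ /=.
by rewrite -big_split; apply: eq_bigr => j _ /=; rewrite mulrDl.
Qed.

Lemma smul_smono c a b g n k : smul (smono c a b) g n k =
  if (a <= n)%N && (b <= k)%N then c * g (n - a)%N (k - b)%N else 0.
Proof.
rewrite /smul /smono; transitivity
  (\sum_(i < n.+1 | i == a :> nat) \sum_(j < k.+1 | j == b :> nat) c * g (n - i)%N (k - j)%N).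
  rewrite [RHS]big_mkcond; apply: eq_bigr => i _; rewrite [in RHS]big_mkcond /=.
  case: eqP => _; last by rewrite big1 // => j _; rewrite mul0r.
  by apply: eq_bigr => j _; case: eqP => _; rewrite ?mul0r.
rewrite (big_ord1_eq _ (fun i => \sum_(j < k.+1 | j == b :> nat) c * g (n - i)%N (k - j)%N)).
by rewrite ltnS; case: leqP => //= _; rewrite (big_ord1_eq _ (fun j => c * g _ (k - j)%N)) ltnS.
Qed.

End SeriesAlgebra.

Theorem theorem2 (q : nat) (hq : 1 <= q) :
  forall n k : nat, smul (Wden q) (W q) n k = Wnum q n k.
Proof.
move=> n k; rewrite /Wden !smul_saddl !smul_smono /Wnum /sadd /smono /W /w_count.
rewrite !card_tuples_nwords.
case: n => [|m]; first by rewrite nwords_qd0 /=; case: k.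
case: k => [|j] /=; rewrite !subSS !subn0.
  rewrite nwords_qdS0 // ltn0 andbF.
  by case: ifP => [/andP [_ /eqP q0] | _]; lia.
have -> : (j.+1 == q) = (j == q.-1) by apply/eqP/eqP; lia.
have := nwords_qdSS hq m j; rewrite nwords_qd_satE // !ltnS.
by case: ifP; case: ifP => /=; lia.
Qed.
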